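(* Let $T$ be a non-star tree and $x$ a vertex of $T$ with neighbors $x_1,\dots,x_n$, $n\ge 4$. Let $3\le p<n$ and let $T'$ be the connected component containing $x$ in $T-\{xx_i: i=1,\dots,p\}$. Suppose that at least two and at most $p-1$ of the trees $T_{(x_i,x)}$, $i=1,\dots,p$, are neighbor $F$-trees of $x$, and that for each remaining $i\in\{1,\dots,p\}$ (those with $T_{(x_i,x)}$ not a neighbor $F$-tree of $x$) there exists a $(T_{(x_i,x)},x_i)$-well 2-placement. If there exists a $(T',z)$-well 2-placement $\sigma'$ with $dist(x,\sigma'(x))\le 3$, where $z$ is a vertex of $T'$ (possibly $z=x$), then there exists a $(T,z)$-well 2-placement $\sigma$ with $\sigma(v)=\sigma'(v)$ for every $v\in V(T')$.
   Context: All graphs are finite, simple and undirected. A non-star tree is a tree not isomorphic to a star $K_{1,m}$ for any $m\ge0$. For an edge $ab$ of a tree $T$, $T_{(a,b)}$ denotes the connected component containing $a$ in $T-\{ab\}$; it is a neighbor $F$-tree of $b$ if it is a path with at most $3$ vertices and, when it has exactly $3$ vertices, $a$ is an end vertex of it. For a tree $S$, a permutation $\sigma$ of $V(S)$ is a 2-placement of $S$ if $\sigma(a)\sigma(b)\notin E(S)$ for every edge $ab\in E(S)$; $\sigma(S)\subseteq S^k$ means $dist_S(\sigma(a),\sigma(b))\le k$ for every edge $ab$ of $S$. For a non-star tree $S$ and vertex $w$, a fixed-point-free permutation $\sigma$ of $V(S)$ is an $(S,w)$-well 2-placement if (distances and degrees taken in $S$): (1) $\sigma$ is a 2-placement of $S$;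 (2) $\sigma(S)\subseteq S^6$; (3) $dist(w,\sigma(w))\le 2$; (4) $dist(y,\sigma(y))\le 3$ for every neighbor $y$ of $w$; (5) $dist(y,\sigma(y))\le 4$ for every $y$ of degree $1$; (6) every cycle of $\sigma$ (in its disjoint cycle decomposition) has length at most $5$. *)

(* A graph is a symmetric irreflexive relation e on a finType V;
   subgraphs are induced subgraphs on vertex sets S : {set V}. *)
From mathcomp Require Import all_boot all_order all_fingroup.
Set Implicit Arguments. Unset Strict Implicit. Unset Printing Implicit Defensive.

Section Defs.
Variable V : finType.
Variable e : rel V.

Definition ind (S : {set V}) : rel V :=
  [rel u v | [&& u \in S, v \in S & e u v]].

Definition deg (S : {set V}) (v : V) : nat := #|[set w in S | e v w]|.

(* the induced subgraph on S is a tree: nonempty, connected, |E| = |S| - 1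
   (edges counted as ordered pairs, hence the doubling) *)
Definition is_tree (S : {set V}) : bool :=
  [&& S != set0,
      [forall u in S, forall v in S, connect (ind S) u v] &
      #|[set q : V * V | ind S q.1 q.2]| == (#|S|).-1.*2].

(* isomorphic to a star K_{1,m}: some centre c lies on every edge *)
Definition is_star (S : {set V}) : bool :=
  [exists c in S, forall u in S, forall v in S, e u v ==> ((u == c) || (v == c))].

Definition nonstar_tree (S : {set V}) : bool := is_tree S && ~~ is_star S.

Definition is_path_graph (S : {set V}) : bool :=
  is_tree S && [forall v in S, deg S v <= 2].

Definition cut_comp (x : V) (X : {set V}) : {set V} :=
  [set v | connect [rel u w | e u w &&
       ~~ (((u == x) && (w \in X)) || ((w == x) && (u \in X)))] x v].

Definition branch (a b : V) : {set V} := cut_comp a [set b].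

Definition nbrF (a b : V) : bool :=
  let S := branch a b in
  [&& is_path_graph S, #|S| <= 3 & (#|S| == 3) ==> (deg S a <= 1)].

Definition dist_le (S : {set V}) (u v : V) (k : nat) : Prop :=
  u \in S /\ exists s : seq V, [&& path (ind S) u s, last u s == v & size s <= k].

(* sigma (a permutation of V(S), extended by the identity) is a 2-placement of S *)
Definition two_placement (S : {set V}) (s : {perm V}) : Prop :=
  perm_on S s /\ forall a b, ind S a b -> ~~ e (s a) (s b).

Definition well2 (S : {set V}) (w : V) (s : {perm V}) : Prop :=
  [/\ nonstar_tree S /\ w \in S,
      {in S, forall v, s v != v} /\ two_placement S s,
      (forall a b, ind S a b -> dist_le S (s a) (s b) 6) /\ dist_le S w (s w) 2,
      (forall y, ind S w y -> dist_le S y (s y) 3)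
        /\ (forall y, y \in S -> deg S y = 1 -> dist_le S y (s y) 4)
    & {in S, forall v, #|porbit s v| <= 5}].

End Defs.

From mathcomp Require Import all_boot all_order all_fingroup.
From mathcomp Require Import zify.
Set Implicit Arguments. Unset Strict Implicit. Unset Printing Implicit Defensive.

(* Cutting the edges x x_i (i < p) splits T into pieces: the core T' = piece x
   and the branches piece x_i.  Since T has |V| - 1 edges, while reaching all
   vertices from r roots needs at least |V| - r edges ([rooted_edge_bound]),
   the p + 1 anchors x, x_i lie in distinct pieces; hence the pieces partition
   V and are joined only by the cut edges.  A permutation is [good_on] a union
   A of pieces when it satisfies on A the requirements of a well 2-placement
   of T, except at cut edges; good permutations of pieces with no kept edge
   between them combine ([good_onU]).  Good permutations come from
   - the given well 2-placement s' of the core ([good_on_core]);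
   - the given well 2-placements of the branches that are not neighbour
     F-trees ([good_on_branch]);
   - blocks of 2 or 3 neighbour F-trees (paths of <= 3 vertices hanging at
     x): a permutation of the positions read off a finite table, [mix_table],
     whose properties are checked by computation ([mix_okP]), transported to
     the block by a coding of its vertices ([good_on_code], [good_on_block]).
   Finally the cut edges are handled directly ([glued_cut_edge]): s' x stays
   in T' and differs from x, every x_i is sent outside T', and both images
   lie within distance 3 of x. *)

Section Distance.
Variable V : finType.
Variable e : rel V.
Hypothesis e_sym : symmetric e.

Lemma indT (u w : V) : ind e [set: V] u w = e u w.
Proof. by rewrite /ind /= !inE. Qed.

Lemma dist_mono (S : {set V}) (u v : V) k k' :
  k <= k' -> dist_le e S u v k -> dist_le e S u v k'.
Proof.
move=> kk [uS [s /and3P[ps ls sk]]]; split=> //; exists s.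
by rewrite ps ls (leq_trans sk kk).
Qed.

Lemma dist_sub (S S' : {set V}) (u v : V) k :
  S \subset S' -> dist_le e S u v k -> dist_le e S' u v k.
Proof.
move=> /subsetP sub [uS [s /and3P[ps ls sk]]]; split; first exact: sub.
have subS : subrel (ind e S) (ind e S').
  by move=> a b /and3P[aS bS eab]; rewrite /ind /= eab !sub.
by exists s; rewrite ls sk (sub_path subS ps).
Qed.

Lemma dist_trans (S : {set V}) (u v w : V) a b :
  dist_le e S u v a -> dist_le e S v w b -> dist_le e S u w (a + b).
Proof.
move=> [uS [s1 /and3P[p1 /eqP l1 k1]]] [_ [s2 /and3P[p2 /eqP l2 k2]]].
split=> //; exists (s1 ++ s2).
by rewrite cat_path p1 last_cat l1 p2 l2 eqxx size_cat leq_add.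
Qed.

Lemma dist_sym (S : {set V}) (u v : V) k :
  dist_le e S u v k -> dist_le e S v u k.
Proof.
move=> [uS [s /and3P[ps /eqP ls sk]]].
have vS : v \in S.
  rewrite -ls; elim: s u uS ps {ls sk} => //= y s IH u _ /andP[/and3P[_ yS _]].
  exact: IH.
split=> //; exists (rev (belast u s)); rewrite -ls rev_path; apply/and3P; split.
- have symS : subrel (ind e S) (fun a b => ind e S b a).
    by move=> a b; rewrite /ind /= e_sym andbCA.
  exact: (sub_path symS ps).
- by case: s {ps ls sk vS} => //= y s; rewrite rev_cons last_rcons.
- by rewrite size_rev size_belast.
Qed.

Lemma distT_edge (u v : V) : e u v -> dist_le e [set: V] u v 1.
Proof.
by move=> euv; split; [rewrite inE | exists [:: v]; rewrite /= indT euv eqxx].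
Qed.

Lemma porbit_le (s : {perm V}) v k : 0 < k -> iter k s v = v -> #|porbit s v| <= k.
Proof.
move=> k0 itk.
have sub : porbit s v \subset traject s v k.
  apply/subsetP => y /porbitP [i ->].
  rewrite permX; apply/trajectP; exists (i %% k); first by rewrite ltn_mod.
  rewrite {1}(divn_eq i k) addnC iterD.
  suff -> : iter (i %/ k * k) s v = v by [].
  by elim: (i %/ k) => [//|q IH]; rewrite mulSn iterD IH itk.
apply: leq_trans (subset_leq_card sub) _.
by apply: leq_trans (card_size _) _; rewrite size_traject.
Qed.

Lemma porbit_agree (s t : {perm V}) (A : {set V}) v :
  perm_on A t -> v \in A -> {in A, forall u, s u = t u} -> porbit s v = porbit t v.
Proof.
move=> tA vA st.
have iterE i : iter i s v = iter i t v /\ iter i t v \in A.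
  by elim: i => [|i [IH1 IH2]] //=; rewrite IH1 st // perm_closed.
by apply/porbit_setP => y; apply/porbitP/porbitP => -[i ->]; exists i;
  rewrite !permX (iterE i).1.
Qed.

Lemma permM_on_left (A1 A2 : {set V}) (s1 s2 : {perm V}) v :
  perm_on A1 s1 -> perm_on A2 s2 -> A1 :&: A2 = set0 -> v \in A1 ->
  (s1 * s2)%g v = s1 v.
Proof.
move=> p1 p2 dis v1; rewrite permM (out_perm p2) //; apply/negP => h.
by move/setP: dis => /(_ (s1 v)); rewrite !inE h perm_closed // v1.
Qed.

End Distance.

(* If every vertex is reached from a set R of roots, a spanning forest grown
   from R shows that the graph has at least |V| - |R| edges (each counted
   twice, as ordered pairs). *)
Section RootedCount.
Variable V : finType.
Variable r : rel V.
Hypothesis r_sym : symmetric r.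
Variable R : {set V}.
Hypothesis cover : forall v, exists2 rho, rho \in R & connect r rho v.

Fixpoint layer (m : nat) : {set V} :=
  if m is m'.+1 then layer m' :|: [set w | [exists u in layer m', r u w]] else R.

Lemma layer_path rho m s :
  rho \in layer m -> path r rho s -> last rho s \in layer (m + size s).
Proof.
elim: s rho m => [|y s IH] rho m /=; first by rewrite addn0.
move=> rm /andP[ry ps]; rewrite addnS -addSn; apply: IH ps.
by rewrite /= !inE; apply/orP; right; apply/existsP; exists rho; rewrite rm ry.
Qed.

Lemma layer_ex v : exists m, v \in layer m.
Proof.
have [rho rR /connectP [s ps ->]] := cover v.
by exists (0 + size s); apply: layer_path.
Qed.

Definition depth v := ex_minn (layer_ex v).

Lemma depth_min v m : v \in layer m -> depth v <= m.
Proof. by rewrite /depth; case: ex_minnP => m' _ H /H. Qed.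

Lemma parent_ex v : v \notin R -> exists u, r u v && (depth u < depth v).
Proof.
move=> vR; rewrite /depth; case: ex_minnP => [[|m] vm mmin].
  by rewrite /= (negbTE vR) in vm.
move: vm; rewrite /= inE => /orP[vm|]; first by have := mmin _ vm; rewrite ltnn.
rewrite inE => /existsP[u /andP[um ruv]]; exists u; rewrite ruv /=.
by rewrite ltnS depth_min.
Qed.

Definition parent v := odflt v [pick u | r u v && (depth u < depth v)].

Lemma parentP v : v \notin R -> r (parent v) v && (depth (parent v) < depth v).
Proof.
move=> vR; rewrite /parent; case: pickP => [u //|H].
by have [u] := parent_ex vR; rewrite H.
Qed.

(* The ordered pairs (parent v, v) and (v, parent v), v not a root, are all
   distinct edges. *)
Lemma rooted_edge_bound : (#|V| - #|R|).*2 <= #|[set q : V * V | r q.1 q.2]|.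
Proof.
set N := ~: R.
pose down v := (parent v, v); pose up v := (v, parent v).
have downI : injective down by move=> a b [].
have upI : injective up by move=> a b [].
have sub : down @: N :|: up @: N \subset [set q : V * V | r q.1 q.2].
  apply/subsetP => q; rewrite !inE => /orP[] /imsetP[v]; rewrite inE => vR ->;
  by have /andP[h _] := parentP vR; rewrite //= r_sym.
have dis : down @: N :&: up @: N = set0.
  apply/setP => q; rewrite !inE; apply/negP => /andP[/imsetP[v vN ->]].
  move=> /imsetP[w wN [e1 e2]]; rewrite /N !inE in vN wN.
  have /andP[_ h1] := parentP wN; have /andP[_ h2] := parentP vN.
  rewrite -e2 in h1; rewrite e1 in h2.
  by move: (ltn_trans h1 h2); rewrite ltnn.
have := subset_leq_card sub; rewrite cardsU dis cards0 subn0 !card_imset //.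
by rewrite -addnn /N cardsCs setCK.
Qed.

End RootedCount.

(* A block of 2 or 3 pendant paths at a common vertex is described by the
   list [sz] of their numbers of vertices (each between 1 and 3).  Slot (t, d)
   is the d-th vertex (d >= 1, counted from the attachment vertex) of path t.
   [mix_table sz] lists, for each such shape, a permutation of the slots; it
   is the combinatorial heart of the construction for neighbour F-trees. *)
Definition mix_table (sz : seq nat) : seq ((nat * nat) * (nat * nat)) :=
  match sz with
  | [:: 1; 1] => [:: (0,1,(1,1)); (1,1,(0,1))]
  | [:: 1; 2] => [:: (0,1,(1,1)); (1,1,(1,2)); (1,2,(0,1))]
  | [:: 1; 3] => [:: (0,1,(1,2)); (1,1,(0,1)); (1,2,(1,3)); (1,3,(1,1))]
  | [:: 2; 1] => [:: (0,1,(0,2)); (0,2,(1,1)); (1,1,(0,1))]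
  | [:: 2; 2] => [:: (0,1,(0,2)); (0,2,(1,1)); (1,1,(1,2)); (1,2,(0,1))]
  | [:: 2; 3] => [:: (0,1,(0,2)); (0,2,(1,2)); (1,1,(0,1)); (1,2,(1,3)); (1,3,(1,1))]
  | [:: 3; 1] => [:: (0,1,(1,1)); (0,2,(0,3)); (0,3,(0,1)); (1,1,(0,2))]
  | [:: 3; 2] => [:: (0,1,(1,1)); (0,2,(0,3)); (0,3,(0,1)); (1,1,(1,2)); (1,2,(0,2))]
  | [:: 3; 3] => [:: (0,1,(0,2)); (0,2,(1,3)); (0,3,(1,1)); (1,1,(1,2)); (1,2,(0,3)); (1,3,(0,1))]
  | [:: 1; 1; 1] => [:: (0,1,(1,1)); (1,1,(2,1)); (2,1,(0,1))]
  | [:: 1; 1; 2] => [:: (0,1,(1,1)); (1,1,(2,1)); (2,1,(2,2)); (2,2,(0,1))]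
  | [:: 1; 1; 3] => [:: (0,1,(1,1)); (1,1,(2,2)); (2,1,(0,1)); (2,2,(2,3)); (2,3,(2,1))]
  | [:: 1; 2; 1] => [:: (0,1,(1,1)); (1,1,(0,1)); (1,2,(2,1)); (2,1,(1,2))]
  | [:: 1; 2; 2] => [:: (0,1,(1,1)); (1,1,(0,1)); (1,2,(2,1)); (2,1,(2,2)); (2,2,(1,2))]
  | [:: 1; 2; 3] => [:: (0,1,(1,1)); (1,1,(0,1)); (1,2,(2,2)); (2,1,(1,2)); (2,2,(2,3)); (2,3,(2,1))]
  | [:: 1; 3; 1] => [:: (0,1,(1,1)); (1,1,(0,1)); (1,2,(1,3)); (1,3,(2,1)); (2,1,(1,2))]
  | [:: 1; 3; 2] => [:: (0,1,(1,1)); (1,1,(0,1)); (1,2,(1,3)); (1,3,(2,1)); (2,1,(2,2)); (2,2,(1,2))]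
  | [:: 1; 3; 3] => [:: (0,1,(1,1)); (1,1,(1,2)); (1,2,(2,3)); (1,3,(2,1)); (2,1,(2,2)); (2,2,(1,3)); (2,3,(0,1))]
  | [:: 2; 1; 1] => [:: (0,1,(0,2)); (0,2,(1,1)); (1,1,(2,1)); (2,1,(0,1))]
  | [:: 2; 1; 2] => [:: (0,1,(0,2)); (0,2,(1,1)); (1,1,(2,1)); (2,1,(2,2)); (2,2,(0,1))]
  | [:: 2; 1; 3] => [:: (0,1,(0,2)); (0,2,(2,1)); (1,1,(2,2)); (2,1,(0,1)); (2,2,(2,3)); (2,3,(1,1))]
  | [:: 2; 2; 1] => [:: (0,1,(0,2)); (0,2,(1,1)); (1,1,(0,1)); (1,2,(2,1)); (2,1,(1,2))]
  | [:: 2; 2; 2] => [:: (0,1,(0,2)); (0,2,(1,1)); (1,1,(0,1)); (1,2,(2,1)); (2,1,(2,2)); (2,2,(1,2))]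
  | [:: 2; 2; 3] => [:: (0,1,(0,2)); (0,2,(1,1)); (1,1,(0,1)); (1,2,(2,2)); (2,1,(1,2)); (2,2,(2,3)); (2,3,(2,1))]
  | [:: 2; 3; 1] => [:: (0,1,(0,2)); (0,2,(1,1)); (1,1,(0,1)); (1,2,(1,3)); (1,3,(2,1)); (2,1,(1,2))]
  | [:: 2; 3; 2] => [:: (0,1,(0,2)); (0,2,(1,1)); (1,1,(0,1)); (1,2,(1,3)); (1,3,(2,1)); (2,1,(2,2)); (2,2,(1,2))]
  | [:: 2; 3; 3] => [:: (0,1,(0,2)); (0,2,(1,1)); (1,1,(1,2)); (1,2,(2,3)); (1,3,(2,1)); (2,1,(2,2)); (2,2,(1,3)); (2,3,(0,1))]
  | [:: 3; 1; 1] => [:: (0,1,(1,1)); (0,2,(0,3)); (0,3,(0,1)); (1,1,(2,1)); (2,1,(0,2))]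
  | [:: 3; 1; 2] => [:: (0,1,(1,1)); (0,2,(0,3)); (0,3,(2,1)); (1,1,(0,1)); (2,1,(2,2)); (2,2,(0,2))]
  | [:: 3; 1; 3] => [:: (0,1,(0,2)); (0,2,(2,3)); (0,3,(1,1)); (1,1,(2,1)); (2,1,(2,2)); (2,2,(0,3)); (2,3,(0,1))]
  | [:: 3; 2; 1] => [:: (0,1,(1,1)); (0,2,(0,3)); (0,3,(0,1)); (1,1,(0,2)); (1,2,(2,1)); (2,1,(1,2))]
  | [:: 3; 2; 2] => [:: (0,1,(1,1)); (0,2,(0,3)); (0,3,(0,1)); (1,1,(0,2)); (1,2,(2,1)); (2,1,(2,2)); (2,2,(1,2))]
  | [:: 3; 2; 3] => [:: (0,1,(0,2)); (0,2,(2,3)); (0,3,(1,1)); (1,1,(1,2)); (1,2,(2,1)); (2,1,(2,2)); (2,2,(0,3)); (2,3,(0,1))]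
  | [:: 3; 3; 1] => [:: (0,1,(0,2)); (0,2,(1,3)); (0,3,(1,1)); (1,1,(1,2)); (1,2,(0,3)); (1,3,(2,1)); (2,1,(0,1))]
  | [:: 3; 3; 2] => [:: (0,1,(0,2)); (0,2,(1,3)); (0,3,(1,1)); (1,1,(1,2)); (1,2,(0,3)); (1,3,(2,1)); (2,1,(2,2)); (2,2,(0,1))]
  | [:: 3; 3; 3] => [:: (0,1,(0,2)); (0,2,(1,3)); (0,3,(2,1)); (1,1,(1,2)); (1,2,(2,3)); (1,3,(0,1)); (2,1,(2,2)); (2,2,(0,3)); (2,3,(1,1))]
  | _ => [::]
  end.

(* The permutation of slots given by the table (the identity off the table). *)
Definition mix (sz : seq nat) (td : nat * nat) : nat * nat :=
  head td [seq q.2 | q <- mix_table sz & q.1 == td].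

Definition slot (sz : seq nat) (td : nat * nat) : bool :=
  (td.1 < size sz) && (0 < td.2 <= nth 0 sz td.1).

Definition slots (sz : seq nat) : seq (nat * nat) :=
  flatten [seq [seq (t, d) | d <- iota 1 (nth 0 sz t)] | t <- iota 0 (size sz)].

Lemma mem_slots sz m : (m \in slots sz) = slot sz m.
Proof.
case: m => t d; rewrite /slots /slot /=; apply/flatten_mapP/andP => [[t' ] | [ht hd]].
  rewrite mem_iota add0n => /andP[_ ht] /mapP [d' ]; rewrite mem_iota => hd [-> ->].
  by split=> //; move: hd; rewrite add1n ltnS.
exists t; first by rewrite mem_iota add0n.
by apply/mapP; exists d => //; rewrite mem_iota add1n ltnS.
Qed.

(* The properties required of the slot permutation, in checkable form:
   it maps slots to slots, injectively, without fixed points; consecutive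
   vertices of a path go to non-consecutive ones; the first vertex of a path
   goes to depth <= 2; a last vertex at depth d goes to depth <= 4 - d; and
   every cycle has length at most 5. *)
Definition mix_ok (sz : seq nat) : bool :=
  let m := mix sz in
  [&& all (fun td => slot sz (m td)) (slots sz),
      all (fun a => all (fun b => (m a == m b) ==> (a == b)) (slots sz)) (slots sz),
      all (fun td => m td != td) (slots sz),
      all (fun td => (td.2 < nth 0 sz td.1) ==>
            let a := m td in let b := m (td.1, td.2.+1) in
            ~~ ((a.1 == b.1) && ((a.2 == b.2.+1) || (b.2 == a.2.+1)))) (slots sz),
      all (fun td => (td.2 == 1) ==> ((m td).2 <= 2)) (slots sz),
      all (fun td => (td.2 == nth 0 sz td.1) ==> (td.2 + (m td).2 <= 4)) (slots sz)
    & all (fun td => has (fun k => iter k m td == td) [:: 1; 2; 3; 4; 5]) (slots sz)].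

(* All 36 shapes pass the check; this is verified by computation. *)
Lemma mix_okP (sz : seq nat) : (size sz == 2) || (size sz == 3) ->
  all (fun s => 0 < s <= 3) sz -> mix_ok sz.
Proof.
case: sz => [|a [|b [|c [|d l]]]] //= _;
  case: a => [|[|[|[|a]]]] //; case: b => [|[|[|[|b]]]] //;
  try (case: c => [|[|[|[|c]]]] //); by [].
Qed.

Section MixFacts.
Variable sz : seq nat.
Hypothesis sz_size : (size sz == 2) || (size sz == 3).
Hypothesis sz_len : all (fun s => 0 < s <= 3) sz.

Let ok := mix_okP sz_size sz_len.

Lemma slot_depth m : slot sz m -> 0 < m.2 <= 3.
Proof.
case/andP => ht /andP[h1 h2]; rewrite h1 /=; apply: leq_trans h2 _.
by move/allP: sz_len => /(_ (nth 0 sz m.1) (mem_nth 0 ht)) /andP[].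
Qed.

Lemma mix_slot m : slot sz m -> slot sz (mix sz m).
Proof. by move: ok => /and4P[/allP h _ _ _]; rewrite -mem_slots => /h. Qed.

Lemma mix_inj m1 m2 : slot sz m1 -> slot sz m2 -> mix sz m1 = mix sz m2 -> m1 = m2.
Proof.
move: ok => /and4P[_ /allP h _ _]; rewrite -!mem_slots => v1 v2 e12.
by move: (h _ v1) => /allP /(_ _ v2); rewrite e12 eqxx => /eqP.
Qed.

Lemma mix_moves m : slot sz m -> mix sz m != m.
Proof. by move: ok => /and4P[_ _ /allP h _]; rewrite -mem_slots => /h. Qed.

Lemma mix_nonadj t d : slot sz (t, d) -> d < nth 0 sz t ->
  let a := mix sz (t, d) in let b := mix sz (t, d.+1) in
  ~~ ((a.1 == b.1) && ((a.2 == b.2.+1) || (b.2 == a.2.+1))).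
Proof.
move: ok => /and4P[_ _ _ /and4P[/allP h _ _ _]].
by rewrite -mem_slots => /h /= /implyP; apply.
Qed.

Lemma mix_first m : slot sz m -> m.2 = 1 -> (mix sz m).2 <= 2.
Proof.
move: ok => /and4P[_ _ _ /and4P[_ /allP h _ _]].
by rewrite -mem_slots => /h /implyP H /eqP /H.
Qed.

Lemma mix_last m : slot sz m -> m.2 = nth 0 sz m.1 -> m.2 + (mix sz m).2 <= 4.
Proof.
move: ok => /and4P[_ _ _ /and4P[_ _ /allP h _]].
by rewrite -mem_slots => /h /implyP H /eqP /H.
Qed.

Lemma mix_cycle m : slot sz m -> exists2 k, 0 < k <= 5 & iter k (mix sz) m = m.
Proof.
move: ok => /and4P[_ _ _ /and4P[_ _ _ /allP h]].
rewrite -mem_slots => /h /hasP [k kin /eqP hk]; exists k => //.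
by move: kin; rewrite !inE => /orP[/eqP->|/orP[/eqP->|/orP[/eqP->|/orP[/eqP->|/eqP->]]]].
Qed.

End MixFacts.

Lemma connect_closed (V : finType) (r : rel V) (A : {set V}) a b :
  (forall u w, u \in A -> r u w -> w \in A) -> a \in A -> connect r a b -> b \in A.
Proof.
move=> cl aA /connectP [s ps ->].
by elim: s a aA ps => [//|y s IH] a aA /= /andP[ay ps]; exact: IH (cl _ _ aA ay) ps.
Qed.

Section TreeFacts.
Variable V : finType.
Variable e : rel V.

Lemma tree_step (S : {set V}) u w : is_tree e S -> u \in S -> w \in S -> u != w ->
  exists2 y, y \in S & e u y.
Proof.
case/and3P=> _ /forallP /(_ u) /implyP conn _ uS wS uw.
move: (conn uS) => /forallP /(_ w) /implyP /(_ wS) /connectP [[|y s] ps lw].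
  by rewrite lw eqxx in uw.
by move: ps => /= /andP[/and3P[_ yS euy] _]; exists y.
Qed.

Lemma deg1_two_nbrs (S : {set V}) a b c : b \in S -> c \in S -> b != c ->
  e a b -> e a c -> deg e S a = 1 -> False.
Proof.
move=> bS cS bc ab ac; rewrite /deg => h.
have : [set b; c] \subset [set w in S | e a w].
  by apply/subsetP => y /set2P [] ->; rewrite inE ?bS ?cS ?ab ?ac.
by move/subset_leq_card; rewrite cards2 bc h.
Qed.

End TreeFacts.

Section Gluing.
Variable V : finType.
Variable e : rel V.
Hypothesis e_sym : symmetric e.
Hypothesis e_irr : irreflexive e.
Hypothesis T_tree : is_tree e [set: V].
Variable x : V.
Variable n : nat.
Variable xs : 'I_n -> V.
Hypothesis xs_inj : injective xs.
Hypothesis xs_nbr : forall v, e x v <-> exists i, xs i = v.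
Hypothesis n_ge2 : 1 < n.
Variable p : nat.

Definition cutnb : {set V} := [set xs i | i : 'I_n & i < p].

Definition kept : rel V := [rel u w | e u w &&
  ~~ (((u == x) && (w \in cutnb)) || ((w == x) && (u \in cutnb)))].

Definition piece (a : V) : {set V} := [set v | connect kept a v].

Definition anchors : {set V} := x |: cutnb.

Lemma kept_sym : symmetric kept.
Proof. by move=> u w; rewrite /kept /= e_sym orbC. Qed.

Lemma kept_e u w : kept u w -> e u w.
Proof. by case/andP. Qed.

Lemma cut_edgeP u w : e u w -> ~~ kept u w ->
  ((u == x) && (w \in cutnb)) || ((w == x) && (u \in cutnb)).
Proof. by rewrite /kept /= => ->; rewrite negbK. Qed.

Lemma cutnbP v : v \in cutnb -> exists2 i : 'I_n, i < p & v = xs i.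
Proof. by case/imsetP => i; rewrite inE => ip ->; exists i. Qed.

Lemma xs_cutnb (i : 'I_n) : i < p -> xs i \in cutnb.
Proof. by move=> ip; apply/imsetP; exists i; rewrite ?inE. Qed.

Lemma e_x_xs (i : 'I_n) : e x (xs i).
Proof. by apply/xs_nbr; exists i. Qed.

Lemma xs_neq_x (i : 'I_n) : xs i != x.
Proof. by apply/eqP => h; have := e_x_xs i; rewrite h e_irr. Qed.

Lemma x_notin_cutnb : x \notin cutnb.
Proof. by apply/negP => /cutnbP [i _ h]; have := xs_neq_x i; rewrite -h eqxx. Qed.

Lemma connect_from_x v : connect e x v.
Proof.
move: T_tree => /and3P[_ /forallP /(_ x) /implyP /(_ (in_setT x))].
move=> /forallP /(_ v) /implyP /(_ (in_setT v)) conn _.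
by apply: connect_sub conn => a b; rewrite indT => ab; exact: connect1.
Qed.

Lemma anchors_cover v : exists2 rho, rho \in anchors & connect kept rho v.
Proof.
have step s a : (exists2 rho, rho \in anchors & connect kept rho a) ->
    path e a s -> exists2 rho, rho \in anchors & connect kept rho (last a s).
  elim: s a => [|y s IH] a //= [rho rR ra] /andP[ay ps]; apply: IH ps.
  case kay : (kept a y).
    by exists rho => //; apply: (connect_trans ra); apply: connect1.
  have := cut_edgeP ay (negbT kay) => /orP[] /andP[/eqP ax yP].
    by exists y; rewrite ?connect0 // /anchors inE yP orbT.
  by exists y; rewrite ?connect0 // ax /anchors setU11.
have /connectP [s ps ->] := connect_from_x v.
by apply: step ps; exists x; rewrite ?setU11 ?connect0.
Qed.

Lemma kept_card :
  #|[set q : V * V | kept q.1 q.2]| + (#|cutnb|).*2 <= (#|V|).-1.*2.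
Proof.
move: T_tree => /and3P[_ _ /eqP]; rewrite cardsT => <-.
set D1 := [set (x, y) | y in cutnb]; set D2 := [set (y, x) | y in cutnb].
have c1 : #|D1| = #|cutnb| by rewrite card_imset // => a b [].
have c2 : #|D2| = #|cutnb| by rewrite card_imset // => a b [].
have d12 : D1 :&: D2 = set0.
  apply/setP => q; rewrite !inE; apply/negP.
  move=> /andP[/imsetP[a aP ->] /imsetP[b bP [h1 h2]]].
  by move: x_notin_cutnb; rewrite -h2 aP.
set E := [set q : V * V | kept q.1 q.2].
have dE : E :&: (D1 :|: D2) = set0.
  apply/setP => q; rewrite !inE; apply/negP => /andP[kq /orP[] /imsetP[a aP eq]];
  by move: kq; rewrite eq /kept /= aP eqxx /= ?andbF ?orbT ?andbF.
have sub : E :|: (D1 :|: D2) \subset [set q : V * V | ind e [set: V] q.1 q.2].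
  apply/subsetP => q; rewrite !inE indT => /orP[/kept_e //|/orP[] /imsetP[a aP ->]];
    by have [i _ ->] := cutnbP aP; rewrite /= ?e_x_xs // e_sym e_x_xs.
have := subset_leq_card sub.
by rewrite cardsU dE cards0 subn0 cardsU d12 cards0 subn0 c1 c2 addnn.
Qed.

(* Distinct anchors lie in distinct pieces: otherwise |cutnb| roots would
   reach all vertices, and the kept edges would be too many by
   [rooted_edge_bound]. *)
Lemma anchors_apart rho1 rho2 : rho1 \in anchors -> rho2 \in anchors ->
  rho1 != rho2 -> ~~ connect kept rho1 rho2.
Proof.
move=> r1 r2 r12; apply/negP => c12.
set R' := anchors :\ rho2.
have cov v : exists2 rho, rho \in R' & connect kept rho v.
  have [rho rR rv] := anchors_cover v.
  case: (eqVneq rho rho2) => [erho|nrho].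
    exists rho1; first by rewrite in_setD1 r12 r1.
    by apply: (connect_trans c12); rewrite -erho.
  by exists rho; rewrite // in_setD1 nrho rR.
have := rooted_edge_bound kept_sym cov.
have cA : #|anchors| = #|cutnb|.+1 by rewrite /anchors cardsU1 x_notin_cutnb.
have cR' : #|R'| = #|cutnb|.
  by move: (cardsD1 rho2 anchors); rewrite r2 cA add1n => -[].
have cV : #|anchors| <= #|V| by apply: max_card.
have := kept_card; rewrite cR' -!mul2n -subn1; move: cV; rewrite cA.
move: #|[set q | kept q.1 q.2]| #|V| #|cutnb| => k a b; lia.
Qed.

Lemma piece_disj a b v : a \in anchors -> b \in anchors -> a != b ->
  v \in piece a -> v \notin piece b.
Proof.
move=> aR bR ab va; apply/negP => vb; apply: (negP (anchors_apart aR bR ab)).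
rewrite /piece !inE in va vb; apply: (connect_trans va).
by rewrite (sym_connect_sym kept_sym).
Qed.

Lemma piece_self a : a \in piece a.
Proof. by rewrite inE connect0. Qed.

Lemma piece_closed a u w : u \in piece a -> kept u w -> w \in piece a.
Proof. by rewrite !inE => ua uw; apply: (connect_trans ua); apply: connect1. Qed.

Lemma x_anchor : x \in anchors.
Proof. by rewrite /anchors setU11. Qed.

Lemma xs_anchor (i : 'I_n) : i < p -> xs i \in anchors.
Proof. by move=> ip; rewrite /anchors inE xs_cutnb ?orbT. Qed.

Lemma branch_piece (i : 'I_n) : i < p -> branch e (xs i) x = piece (xs i).
Proof.
move=> ip; apply/setP => v; rewrite /branch /cut_comp /piece !inE; apply/idP/idP.
  move=> hc; suff: v \in piece (xs i) by rewrite inE.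
  apply: (connect_closed _ (piece_self (xs i)) hc) => u w uC /andP[euw h].
  case kuw : (kept u w); first by apply: piece_closed uC kuw.
  have := cut_edgeP euw (negbT kuw) => /orP[] /andP[/eqP ux wP].
    have := piece_disj (xs_anchor ip) x_anchor (xs_neq_x i) uC.
    by rewrite -ux piece_self.
  have [j jp uj] := cutnbP wP.
  have nij : xs i != xs j.
    by apply: contra h => /eqP ij; rewrite uj -ij eqxx ux inE eqxx.
  have := piece_disj (xs_anchor ip) (xs_anchor jp) nij uC; by rewrite uj piece_self.
apply: connect_sub => a b ab; apply: connect1.
rewrite /= (kept_e ab) /=; apply/negP => /orP[] /andP[/eqP ai]; rewrite inE => /eqP bx;
  move: ab; rewrite /kept /= ai bx eqxx xs_cutnb //= ?andbF ?orbT //= ?andbF //.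
Qed.

Lemma piece_cover v : v \in piece x \/ exists2 i : 'I_n, i < p & v \in piece (xs i).
Proof.
have [rho] := anchors_cover v; rewrite /anchors !inE => /orP[/eqP -> xv|rP rv].
  by left.
by right; have [i ip ri] := cutnbP rP; exists i; rewrite // /piece inE -ri.
Qed.

Lemma piece_xs_inj (i j : 'I_n) v : i < p -> j < p ->
  v \in piece (xs i) -> v \in piece (xs j) -> i = j.
Proof.
move=> ip jp vi vj; case: (eqVneq (xs i) (xs j)) => [/xs_inj //|nij].
by have := piece_disj (xs_anchor ip) (xs_anchor jp) nij vi; rewrite vj.
Qed.

Lemma branch_notin_core (i : 'I_n) v : i < p -> v \in piece (xs i) -> v \notin piece x.
Proof. by move=> ip; apply: piece_disj (xs_anchor ip) x_anchor (xs_neq_x i). Qed.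

Lemma x_notin_branch (i : 'I_n) : i < p -> x \notin piece (xs i).
Proof.
by move=> ip; apply/negP => h; have := branch_notin_core ip h; rewrite piece_self.
Qed.

Lemma cutnb_in_branch (i j : 'I_n) : i < p -> j < p -> xs j \in piece (xs i) -> j = i.
Proof. by move=> ip jp h; apply: (piece_xs_inj jp ip (piece_self _) h). Qed.

Lemma cutnb_notin_core v : v \in cutnb -> v \notin piece x.
Proof. by case/cutnbP => i ip ->; apply: branch_notin_core ip (piece_self _). Qed.

Lemma branch_edge_out (i : 'I_n) u w : i < p ->
  u \in piece (xs i) -> w \notin piece (xs i) -> e u w -> u = xs i /\ w = x.
Proof.
move=> ip uB wB euw; case kuw : (kept u w).
  by rewrite (piece_closed uB kuw) in wB.
have := cut_edgeP euw (negbT kuw) => /orP[] /andP[/eqP ux wP].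
  by move: (x_notin_branch ip); rewrite -ux uB.
have [j jp uj] := cutnbP wP; split=> //; rewrite uj in uB *.
by rewrite (cutnb_in_branch ip jp uB).
Qed.

Lemma core_edge_out u w : u \in piece x -> w \notin piece x -> e u w ->
  u = x /\ w \in cutnb.
Proof.
move=> uT wT euw; case kuw : (kept u w).
  by rewrite (piece_closed uT kuw) in wT.
have := cut_edgeP euw (negbT kuw) => /orP[] /andP[/eqP ux wP] //.
by move: (cutnb_notin_core wP); rewrite uT.
Qed.

Lemma branch_edge_within (i j : 'I_n) u w : i < p -> j < p ->
  u \in piece (xs i) -> w \in piece (xs j) -> e u w -> i = j.
Proof.
move=> ip jp ui wj euw; case: (boolP (w \in piece (xs i))) => wi.
  exact: piece_xs_inj ip jp wi wj.
have [_ wx] := branch_edge_out ip ui wi euw.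
by move: (x_notin_branch jp); rewrite -wx wj.
Qed.

Lemma deg_core v : v \in piece x -> v != x -> deg e [set: V] v = deg e (piece x) v.
Proof.
move=> vT vx; rewrite /deg; apply: eq_card => w; rewrite !inE.
case evw : (e v w); rewrite ?andbF ?andbT //.
apply/esym/negPn/negP => wT; have wT' : w \notin piece x by rewrite /piece inE.
by have [h _] := core_edge_out vT wT' evw; rewrite h eqxx in vx.
Qed.

Lemma deg_branch (i : 'I_n) v : i < p -> v \in piece (xs i) -> v != xs i ->
  deg e [set: V] v = deg e (piece (xs i)) v.
Proof.
move=> ip vB vx; rewrite /deg; apply: eq_card => w; rewrite !inE.
case evw : (e v w); rewrite ?andbF ?andbT //.
apply/esym/negPn/negP => wB; have wB' : w \notin piece (xs i) by rewrite /piece inE.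
by have [h _] := branch_edge_out ip vB wB' evw; rewrite h eqxx in vx.
Qed.

Lemma deg_x : 2 <= deg e [set: V] x.
Proof.
pose o0 := Ordinal (ltnW n_ge2); pose o1 := Ordinal n_ge2.
have ne : xs o0 != xs o1 by rewrite (inj_eq xs_inj).
have : [set xs o0; xs o1] \subset [set w in [set: V] | e x w].
  by apply/subsetP => w; rewrite !inE => /orP[] /eqP ->; rewrite e_x_xs.
by move/subset_leq_card; rewrite cards2 ne.
Qed.

Definition good_on (A : {set V}) (s : {perm V}) : Prop :=
 [/\ perm_on A s /\ {in A, forall v, s v != v},
     (forall u w, u \in A -> w \in A -> kept u w ->
        ~~ e (s u) (s w) /\ dist_le e [set: V] (s u) (s w) 6),
     (forall v, v \in A -> v \in cutnb ->
        dist_le e [set: V] v (s v) 3 /\ dist_le e [set: V] x (s v) 3),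
     (forall v, v \in A -> deg e [set: V] v = 1 -> dist_le e [set: V] v (s v) 4) &
     {in A, forall v, #|porbit s v| <= 5}].

Lemma good_on0 : good_on set0 1.
Proof. by split; first split; rewrite ?perm_on1 // => u; rewrite inE. Qed.

Lemma good_onU A1 A2 s1 s2 : A1 :&: A2 = set0 ->
  (forall u w, u \in A1 -> w \in A2 -> ~~ kept u w) ->
  good_on A1 s1 -> good_on A2 s2 -> good_on (A1 :|: A2) (s1 * s2)%g.
Proof.
move=> dis sep [[p1 f1] a1 d1 l1 o1] [[p2 f2] a2 d2 l2 o2].
have e1 : {in A1, forall v, (s1 * s2)%g v = s1 v}.
  by move=> v v1; apply: permM_on_left p1 p2 dis v1.
have e2 : {in A2, forall v, (s1 * s2)%g v = s2 v}.
  move=> v v2; rewrite permM (out_perm p1) //; apply/negP => v1.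
  by move/setP: dis => /(_ v); rewrite !inE v1 v2.
split; first split.
- by apply: perm_onM; [apply: subset_trans p1 (subsetUl _ _) |
                       apply: subset_trans p2 (subsetUr _ _)].
- by move=> v; rewrite inE => /orP[v1|v2]; [rewrite e1 // f1 | rewrite e2 // f2].
- move=> u w; rewrite !inE => /orP[u1|u2] /orP[w1|w2] uw.
  + by rewrite !e1 //; apply: a1.
  + by move: (sep _ _ u1 w2); rewrite uw.
  + by move: (sep _ _ w1 u2); rewrite kept_sym uw.
  + by rewrite !e2 //; apply: a2.
- move=> v; rewrite inE => /orP[v1|v2] vP.
  + by rewrite e1 //; apply: d1.
  + by rewrite e2 //; apply: d2.
- move=> v; rewrite inE => /orP[v1|v2] dv.
  + by rewrite e1 //; apply: l1.
  + by rewrite e2 //; apply: l2.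
- move=> v; rewrite inE => /orP[v1|v2].
    by rewrite (porbit_agree p1 v1 e1) o1.
  by rewrite (porbit_agree p2 v2 e2) o2.
Qed.

Lemma good_on_branch (i : 'I_n) t : i < p ->
  well2 e (piece (xs i)) (xs i) t -> good_on (piece (xs i)) t.
Proof.
move=> ip [_ [fp [pon adj]] [dE dw] [_ dl] po]; split=> //.
- move=> u w uB wB uw.
  have iuw : ind e (piece (xs i)) u w by rewrite /ind /= uB wB (kept_e uw).
  by split; [apply: adj | apply: dist_sub (subsetT _) (dE _ _ iuw)].
- move=> v vB vP; have [j jp vj] := cutnbP vP; rewrite vj in vB *.
  rewrite (cutnb_in_branch ip jp vB); have dwT := dist_sub (subsetT _) dw.
  by split; [apply: dist_mono dwT | apply: dist_trans (distT_edge (e_x_xs i)) dwT].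
- move=> v vB dv; case: (eqVneq v (xs i)) => [->|vx].
    exact: dist_mono (dist_sub (subsetT _) dw).
  by apply: dist_sub (subsetT _) (dl _ vB _); rewrite -deg_branch.
Qed.

Lemma good_on_core z t : well2 e (piece x) z t -> good_on (piece x) t.
Proof.
move=> [_ [fp [pon adj]] [dE _] [_ dl] po]; split=> //.
- move=> u w uT wT uw; have iuw : ind e (piece x) u w by rewrite /ind /= uT wT (kept_e uw).
  by split; [apply: adj | apply: dist_sub (subsetT _) (dE _ _ iuw)].
- by move=> v vT vP; move: (cutnb_notin_core vP); rewrite vT.
- move=> v vT dv; case: (eqVneq v x) => [vx|vx].
    by move: deg_x; rewrite -vx dv.
  by apply: dist_sub (subsetT _) (dl _ vT _); rewrite -deg_core.
Qed.

Section SlotCode.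
Variable A : {set V}.
Variable sz : seq nat.
Variable vt : nat * nat -> V.
Variable pos : V -> nat * nat.
Hypothesis sz_size : (size sz == 2) || (size sz == 3).
Hypothesis sz_len : all (fun s => 0 < s <= 3) sz.
Hypothesis vt_in : forall m, slot sz m -> vt m \in A.
Hypothesis posK : forall v, v \in A -> slot sz (pos v) /\ vt (pos v) = v.
Hypothesis vtK : forall m, slot sz m -> pos (vt m) = m.
Hypothesis vt_edge : forall m1 m2, slot sz m1 -> slot sz m2 -> e (vt m1) (vt m2) ->
  m1.1 = m2.1 /\ (m1.2 = m2.2.+1 \/ m2.2 = m1.2.+1).
Hypothesis vt_dist : forall m, slot sz m -> dist_le e [set: V] x (vt m) m.2.
Hypothesis pos_cutnb : forall v, v \in A -> v \in cutnb -> (pos v).2 = 1.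
Hypothesis pos_leaf : forall v, v \in A -> deg e [set: V] v = 1 ->
  (pos v).2 = nth 0 sz (pos v).1.

Definition code_fun (v : V) : V := if v \in A then vt (mix sz (pos v)) else v.

Lemma code_funE v : v \in A -> code_fun v = vt (mix sz (pos v)).
Proof. by rewrite /code_fun => ->. Qed.

Lemma code_fun_out v : v \notin A -> code_fun v = v.
Proof. by rewrite /code_fun => /negbTE ->. Qed.

Lemma code_fun_in v : v \in A -> code_fun v \in A.
Proof. by move=> vA; rewrite code_funE //; apply/vt_in/mix_slot => //; case: (posK vA). Qed.

Lemma code_fun_inj : injective code_fun.
Proof.
move=> u w; case: (boolP (u \in A)) => uA; case: (boolP (w \in A)) => wA.
- rewrite !code_funE // => h; have [su eu] := posK uA; have [sw ew] := posK wA.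
  have := congr1 pos h; rewrite !vtK ?mix_slot // => /mix_inj h2.
  by rewrite -eu -ew h2 // ?mix_slot.
- by move=> h; move: (code_fun_in uA); rewrite h code_fun_out // (negbTE wA).
- by move=> h; move: (code_fun_in wA); rewrite -h code_fun_out // (negbTE uA).
- by rewrite !code_fun_out.
Qed.

Definition code_perm : {perm V} := perm code_fun_inj.

Lemma code_permE v : v \in A -> code_perm v = vt (mix sz (pos v)).
Proof. by move=> vA; rewrite permE code_funE. Qed.

Lemma code_perm_on : perm_on A code_perm.
Proof.
by apply/subsetP => v; rewrite inE permE; apply: contraR => vA; rewrite code_fun_out.
Qed.

Lemma code_perm_moves v : v \in A -> code_perm v != v.
Proof.
move=> vA; rewrite code_permE //; have [sv ev] := posK vA.
apply/eqP => h; have := congr1 pos h; rewrite vtK ?mix_slot // => h'.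
by move: (mix_moves sz_size sz_len sv); rewrite h' eqxx.
Qed.

(* Consecutive slots are sent to non-consecutive ones, hence to non-edges. *)
Lemma code_perm_nonedge u w : u \in A -> w \in A -> e u w ->
  ~~ e (code_perm u) (code_perm w).
Proof.
move=> uA wA euw; rewrite !code_permE //; apply/negP => ee.
have [su eu] := posK uA; have [sw ew] := posK wA.
have mu := mix_slot sz_size sz_len su; have mw := mix_slot sz_size sz_len sw.
have [t1 d1] := vt_edge mu mw ee.
have := vt_edge su sw; rewrite eu ew => /(_ euw) [t2 d2].
case: (pos u) su mu t1 d1 t2 d2 => tu du su mu t1 d1 t2 d2.
case: (pos w) sw mw t1 d1 t2 d2 => tw dw sw mw t1 d1 t2 d2.
rewrite /= in t2 d2; subst tw.
case: d2 => hd; subst.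
- have lt : dw < nth 0 sz tu by case/andP: su => _ /andP[_].
  move: (mix_nonadj sz_size sz_len sw lt); rewrite /= -t1 eqxx /=.
  by case: d1 => ->; rewrite eqxx ?orbT.
- have lt : du < nth 0 sz tu by case/andP: sw => _ /andP[_].
  move: (mix_nonadj sz_size sz_len su lt); rewrite /= t1 eqxx /=.
  by case: d1 => ->; rewrite eqxx ?orbT.
Qed.

(* All slots are within distance 3 of x, so images are within 6 of each other. *)
Lemma code_perm_dist u w : u \in A -> w \in A ->
  dist_le e [set: V] (code_perm u) (code_perm w) 6.
Proof.
have dx m : slot sz m -> dist_le e [set: V] x (vt m) 3.
  by move=> sm; apply: dist_mono (vt_dist sm); case/andP: (slot_depth sz_len sm).
move=> uA wA; rewrite !code_permE //.
have mu := mix_slot sz_size sz_len (posK uA).1.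
have mw := mix_slot sz_size sz_len (posK wA).1.
exact: dist_trans (dist_sym e_sym (dx _ mu)) (dx _ mw).
Qed.

Lemma code_perm_cutnb v : v \in A -> v \in cutnb ->
  dist_le e [set: V] v (code_perm v) 3 /\ dist_le e [set: V] x (code_perm v) 3.
Proof.
move=> vA vP; rewrite code_permE //; have [sv ev] := posK vA.
have vx : dist_le e [set: V] v x 1.
  by apply: (dist_sym e_sym); rewrite -(pos_cutnb vA vP) -{1}ev; apply: vt_dist.
have xv' : dist_le e [set: V] x (vt (mix sz (pos v))) 2.
  apply: dist_mono (vt_dist (mix_slot sz_size sz_len sv)).
  exact: mix_first (pos_cutnb vA vP).
by split; [exact: dist_trans vx xv' | exact: dist_mono xv'].
Qed.

Lemma code_perm_leaf v : v \in A -> deg e [set: V] v = 1 ->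
  dist_le e [set: V] v (code_perm v) 4.
Proof.
move=> vA dv; rewrite code_permE //; have [sv ev] := posK vA.
have vx : dist_le e [set: V] v x (pos v).2.
  by apply: (dist_sym e_sym); rewrite -{1}ev; apply: vt_dist.
apply: dist_mono (dist_trans vx (vt_dist (mix_slot sz_size sz_len sv))).
exact: mix_last (pos_leaf vA dv).
Qed.

Lemma code_perm_orbit v : v \in A -> #|porbit code_perm v| <= 5.
Proof.
move=> vA; have [sv ev] := posK vA.
have [k /andP[k0 k5] hk] := mix_cycle sz_size sz_len sv.
have iterE j : iter j code_perm v = vt (iter j (mix sz) (pos v)) /\
               slot sz (iter j (mix sz) (pos v)).
  elim: j => [|j [IH1 IH2]] /=; first by rewrite ev.
  by rewrite IH1 code_permE ?vtK ?vt_in //; split=> //; exact: mix_slot.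
apply: leq_trans (porbit_le k0 _) k5.
by rewrite (iterE k).1 hk ev.
Qed.

Lemma good_on_code : good_on A code_perm.
Proof.
split; first by split; [exact: code_perm_on | exact: code_perm_moves].
- move=> u w uA wA uw.
  by split; [exact: code_perm_nonedge (kept_e uw) | exact: code_perm_dist].
- exact: code_perm_cutnb.
- exact: code_perm_leaf.
- exact: code_perm_orbit.
Qed.

End SlotCode.

(* The vertices of the branch at x_i, listed from x_i outwards when it is a
   neighbour F-tree: x_i, [second i], [third i]. *)
Definition second (i : 'I_n) : V :=
  odflt (xs i) [pick w in piece (xs i) | e (xs i) w].

Definition third (i : 'I_n) : V :=
  odflt (xs i) [pick w in piece (xs i) | (w != xs i) && (w != second i)].

Definition at_depth (i : 'I_n) (d : nat) : V :=
  if d == 1 then xs i else if d == 2 then second i else third i.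

Definition level (i : 'I_n) (v : V) : nat :=
  if v == xs i then 1 else if v == second i then 2 else 3.

Section NbrFTree.
Variable i : 'I_n.
Hypothesis ip : i < p.
Hypothesis Fi : nbrF e (xs i) x.
Local Notation B := (piece (xs i)).

Lemma nbrF_piece : [/\ is_tree e B, #|B| <= 3 & (#|B| == 3) ==> (deg e B (xs i) <= 1)].
Proof. by move: Fi; rewrite /nbrF branch_piece // => /and3P[/andP[]]. Qed.

Lemma second_spec : 1 < #|B| -> second i \in B /\ e (xs i) (second i).
Proof.
have [tr _ _] := nbrF_piece; have xB : xs i \in B by apply: piece_self.
move=> c2; have [w wB wx] : exists2 w, w \in B & xs i != w.
  move: c2; rewrite (cardsD1 (xs i)) xB add1n ltnS => /card_gt0P [w].
  by rewrite in_setD1 eq_sym => /andP[wx wB]; exists w.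
rewrite /second; case: pickP => [y /andP[yB ey] //|none].
by have [y yB ey] := tree_step tr xB wB wx; move: (none y); rewrite yB ey.
Qed.

Lemma third_spec : #|B| = 3 -> [/\ third i \in B, third i != xs i & third i != second i].
Proof.
move=> c3; rewrite /third; case: pickP => [y /and3P[yB y1 y2] //|none].
have : ~~ (B \subset [set xs i; second i]).
  by apply/negP => /subset_leq_card; rewrite c3 cards2; case: (_ != _).
case/subsetPn => y yB; rewrite !inE negb_or => /andP[y1 y2].
by move: (none y); rewrite yB y1 y2.
Qed.

Lemma nbrF_shape :
  [\/ B = [set xs i] /\ #|B| = 1,
      [/\ B = [set xs i; second i], #|B| = 2, e (xs i) (second i) & xs i != second i] |
      [/\ B = [set xs i; second i; third i], #|B| = 3,
          [/\ e (xs i) (second i), e (second i) (third i) & ~~ e (xs i) (third i)] &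
          [/\ xs i != second i, second i != third i & xs i != third i]]].
Proof.
have [tr c3 d3] := nbrF_piece; have xB : xs i \in B by apply: piece_self.
have c1 : 0 < #|B| by apply/card_gt0P; exists (xs i).
have [/eqP c11|c2] := boolP (#|B| == 1).
  constructor 1; split=> //; apply/eqP; rewrite eq_sym eqEcard cards1 c11 andbT.
  by apply/subsetP => w; rewrite inE => /eqP ->.
have c22 : 1 < #|B| by rewrite ltn_neqAle eq_sym c2 c1.
have [v2B e2] := second_spec c22.
have n12 : xs i != second i by apply/eqP => h; move: e2; rewrite -h e_irr.
have [/eqP c22'|c3'] := boolP (#|B| == 2).
  constructor 2; split=> //; apply/eqP; rewrite eq_sym eqEcard cards2 n12 c22' leqnn andbT.
  by apply/subsetP => y /set2P [] ->.
have c33 : #|B| = 3 by apply/eqP; rewrite eqn_leq c3 ltn_neqAle eq_sym c3' c22.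
have [v3B n13 n23] := third_spec c33.
have Beq : B = [set xs i; second i; third i].
  apply/eqP; rewrite eq_sym eqEcard c33 andbC.
  rewrite setUC cardsU1 cards2 !inE negb_or n13 n23 n12 /=.
  by apply/subsetP => y /setUP [/set1P ->|/set2P [] ->].
have ne13 : ~~ e (xs i) (third i).
  apply/negP => e3; move: d3; rewrite c33 eqxx /= /deg.
  have : [set second i; third i] \subset [set w0 in B | e (xs i) w0].
    by apply/subsetP => y /set2P [] ->; rewrite inE ?v2B ?v3B ?e2 ?e3.
  by move/subset_leq_card; rewrite cards2 eq_sym n23 => /leq_trans H /H.
have e23 : e (second i) (third i).
  have [y yB ey] := tree_step tr v3B xB n13.
  move: yB; rewrite Beq => /setUP [/set2P [] yv| /set1P yv].
  - by move: ne13; rewrite -yv e_sym ey.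
  - by rewrite e_sym -yv.
  - by move: ey; rewrite yv e_irr.
by constructor 3; split=> //; split; rewrite // eq_sym.
Qed.

Ltac shape_cases := case: nbrF_shape =>
  [[-> ->]|[-> -> e12 n12]|[-> -> [e12 e23 ne13] [n12 n23 n13]]].

Lemma nbrF_card : 0 < #|B| <= 3.
Proof. by case: nbrF_shape => [[_ ->]|[_ -> _ _]|[_ -> _ _]]. Qed.

Lemma at_depth_piece d : 0 < d <= #|B| -> at_depth i d \in B.
Proof.
by shape_cases; case: d => [|[|[|[|d]]]] //= _; rewrite /at_depth /= !inE ?eqxx ?orbT.
Qed.

Lemma levelK v : v \in B -> 0 < level i v <= #|B| /\ at_depth i (level i v) = v.
Proof.
rewrite /level /at_depth; shape_cases.
- by move/set1P ->; rewrite eqxx.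
- by move/set2P => [] ->; rewrite ?eqxx // eq_sym (negbTE n12) eqxx.
- move/setUP => [/set2P [] ->|/set1P ->]; rewrite ?eqxx //.
  + by rewrite eq_sym (negbTE n12) eqxx.
  + by rewrite eq_sym (negbTE n13) eq_sym (negbTE n23).
Qed.

Lemma at_depthK d : 0 < d <= #|B| -> level i (at_depth i d) = d.
Proof.
rewrite /level /at_depth; shape_cases; case: d => [|[|[|[|d]]]] //= _; rewrite ?eqxx //.
- by rewrite eq_sym (negbTE n12).
- by rewrite eq_sym (negbTE n12).
- by rewrite eq_sym (negbTE n13) eq_sym (negbTE n23).
Qed.

Lemma at_depth_edge d1 d2 : 0 < d1 <= #|B| -> 0 < d2 <= #|B| ->
  e (at_depth i d1) (at_depth i d2) -> d1 = d2.+1 \/ d2 = d1.+1.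
Proof.
rewrite /at_depth; shape_cases; case: d1 => [|[|[|[|d1]]]] //= _;
  case: d2 => [|[|[|[|d2]]]] //= _; rewrite ?e_irr //; try by [left|right].
- by rewrite (negbTE ne13).
- by rewrite e_sym (negbTE ne13).
Qed.

Lemma at_depth_dist d : 0 < d <= #|B| -> dist_le e [set: V] x (at_depth i d) d.
Proof.
have xxi := distT_edge (e_x_xs i).
rewrite /at_depth; shape_cases; case: d => [|[|[|[|d]]]] //= _.
- exact: dist_trans xxi (distT_edge e12).
- exact: dist_trans xxi (distT_edge e12).
- exact: dist_trans (dist_trans xxi (distT_edge e12)) (distT_edge e23).
Qed.

Lemma level_cutnb v : v \in B -> v \in cutnb -> level i v = 1.
Proof.
move=> vB /cutnbP [j jp vj]; rewrite vj in vB *.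
by rewrite (cutnb_in_branch ip jp vB) /level eqxx.
Qed.

(* A leaf of T in B is its far end: x_i and v2 have a neighbour on each side. *)
Lemma level_leaf v : v \in B -> deg e [set: V] v = 1 -> level i v = #|B|.
Proof.
have exi : e (xs i) x by rewrite e_sym e_x_xs.
have two_nbrs := @deg1_two_nbrs V e [set: V] _ _ _ (in_setT _) (in_setT _).
move: (x_notin_branch ip); case: nbrF_shape =>
  [[S1 c1]|[S2 c2 e12 n12]|[S3 c3 [e12 e23 ne13] [n12 n23 n13]]];
  rewrite /level ?c1 ?c2 ?c3 ?S1 ?S2 ?S3 => xnB.
- by move/set1P ->; rewrite eqxx.
- have xv2 : x != second i by apply: contra xnB => /eqP ->; rewrite !inE eqxx orbT.
  move/set2P => [] -> dv; rewrite ?eqxx.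
  + by case: (two_nbrs _ _ _ xv2 exi e12 dv).
  + by rewrite eq_sym (negbTE n12).
- have xv2 : x != second i by apply: contra xnB => /eqP ->; rewrite !inE eqxx !orbT.
  move/setUP => [/set2P [] ->|/set1P ->] dv; rewrite ?eqxx.
  + by case: (two_nbrs _ _ _ xv2 exi e12 dv).
  + by rewrite e_sym in e12; case: (two_nbrs _ _ _ n13 e12 e23 dv).
  + by rewrite eq_sym (negbTE n13) eq_sym (negbTE n23).
Qed.

End NbrFTree.

Lemma mem_bigcup_pieces (s : seq 'I_n) v :
  (v \in \bigcup_(i <- s) piece (xs i)) = has (fun i => v \in piece (xs i)) s.
Proof. by rewrite bigcup_seq; apply/bigcupP/hasP => -[i ig vi]; exists i. Qed.

(* A block g of 2 or 3 distinct neighbour F-trees, coded by the slots of the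
   shape listing their sizes: slot (t, d) is the vertex at depth d of the
   t-th branch of g. *)
Section Block.
Variable g : seq 'I_n.
Hypothesis g_uniq : uniq g.
Hypothesis g_F : all (fun i : 'I_n => (i < p) && nbrF e (xs i) x) g.
Hypothesis g_size : (size g == 2) || (size g == 3).

Let i0 : 'I_n := Ordinal (ltnW n_ge2).
Local Notation gi t := (nth i0 g t).
Local Notation A := (\bigcup_(i <- g) piece (xs i)).
Local Notation shape := [seq #|piece (xs i)| | i <- g].
Local Notation index v := (find (fun i => v \in piece (xs i)) g).
Local Notation pos := (fun v => (index v, level (gi (index v)) v)).
Local Notation vt := (fun m : nat * nat => at_depth (gi m.1) m.2).

Lemma block_F t : t < size g -> gi t < p /\ nbrF e (xs (gi t)) x.
Proof. by move=> tg; move/allP: g_F => /(_ (gi t) (mem_nth i0 tg)) /andP[]. Qed.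

Lemma block_slotE m : slot shape m = (m.1 < size g) && (0 < m.2 <= #|piece (xs (gi m.1))|).
Proof. by rewrite /slot size_map; case: ltnP => // tg; rewrite (nth_map i0). Qed.

Lemma block_gi_inj t1 t2 : t1 < size g -> t2 < size g -> gi t1 = gi t2 -> t1 = t2.
Proof. by move=> h1 h2 h; apply/eqP; rewrite -(nth_uniq i0 h1 h2 g_uniq); apply/eqP. Qed.

Lemma block_index v : v \in A -> index v < size g /\ v \in piece (xs (gi (index v))).
Proof.
by rewrite mem_bigcup_pieces => h; split; [rewrite -has_find | exact: (nth_find i0 h)].
Qed.

Lemma block_shape_len : all (fun s => 0 < s <= 3) shape.
Proof.
apply/allP => s0 /mapP [i ig ->].
by move/allP: g_F => /(_ i ig) /andP[ip Fi]; apply: nbrF_card.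
Qed.

Lemma block_vt_in m : slot shape m -> vt m \in A.
Proof.
case: m => t d; rewrite block_slotE /= => /andP[tg dd].
rewrite mem_bigcup_pieces; apply/hasP; exists (gi t); first exact: mem_nth.
by have [ip Fi] := block_F tg; apply: at_depth_piece.
Qed.

Lemma block_posK v : v \in A -> slot shape (pos v) /\ vt (pos v) = v.
Proof.
move=> vA; have [tg vB] := block_index vA; have [ip Fi] := block_F tg.
by have [h1 h2] := levelK ip Fi vB; rewrite block_slotE /= tg h1.
Qed.

Lemma block_vtK m : slot shape m -> pos (vt m) = m.
Proof.
case: m => t d; rewrite block_slotE /= => /andP[tg dd].
have [ip Fi] := block_F tg; have wB := at_depth_piece ip Fi dd.
have wA : at_depth (gi t) d \in A.
  by apply: (block_vt_in (m := (t, d))); rewrite block_slotE /= tg dd.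
have [tg' wB'] := block_index wA.
have [ip' _] := block_F tg'.
have -> : index (at_depth (gi t) d) = t.
  by apply: block_gi_inj => //; apply: piece_xs_inj ip' ip wB' wB.
by rewrite at_depthK.
Qed.

Lemma block_vt_edge m1 m2 : slot shape m1 -> slot shape m2 -> e (vt m1) (vt m2) ->
  m1.1 = m2.1 /\ (m1.2 = m2.2.+1 \/ m2.2 = m1.2.+1).
Proof.
case: m1 m2 => [t1 d1] [t2 d2]; rewrite !block_slotE /= => /andP[t1g dd1] /andP[t2g dd2] ee.
have [ip1 F1] := block_F t1g; have [ip2 F2] := block_F t2g.
have B1 := at_depth_piece ip1 F1 dd1; have B2 := at_depth_piece ip2 F2 dd2.
have et := block_gi_inj t1g t2g (branch_edge_within ip1 ip2 B1 B2 ee); subst t2.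
by split=> //; exact: (at_depth_edge ip1 F1 dd1 dd2 ee).
Qed.

Lemma block_vt_dist m : slot shape m -> dist_le e [set: V] x (vt m) m.2.
Proof.
case: m => t d; rewrite block_slotE /= => /andP[tg dd].
by have [ip Fi] := block_F tg; exact: at_depth_dist.
Qed.

Lemma block_pos_cutnb v : v \in A -> v \in cutnb -> (pos v).2 = 1.
Proof.
move=> vA vP; have [tg vB] := block_index vA; have [ip _] := block_F tg.
exact: (level_cutnb ip vB vP).
Qed.

Lemma block_pos_leaf v : v \in A -> deg e [set: V] v = 1 -> (pos v).2 = nth 0 shape (pos v).1.
Proof.
move=> vA dv; have [tg vB] := block_index vA; have [ip Fi] := block_F tg.
by rewrite /= (nth_map i0) // (level_leaf ip Fi vB dv).
Qed.

Lemma good_on_block : exists s, good_on A s.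
Proof.
have shape_size : (size shape == 2) || (size shape == 3) by rewrite size_map.
eexists; exact: (good_on_code shape_size block_shape_len block_vt_in block_posK
  block_vtK block_vt_edge block_vt_dist block_pos_cutnb block_pos_leaf).
Qed.

End Block.

Lemma pieces_apart (s1 s2 : seq 'I_n) :
  uniq (s1 ++ s2) -> all (fun i : 'I_n => i < p) (s1 ++ s2) ->
  (\bigcup_(i <- s1) piece (xs i)) :&: (\bigcup_(i <- s2) piece (xs i)) = set0 /\
  (forall u w, u \in \bigcup_(i <- s1) piece (xs i) ->
     w \in \bigcup_(i <- s2) piece (xs i) -> ~~ kept u w).
Proof.
rewrite cat_uniq all_cat => /and3P[_ nh _] /andP[/allP a1 /allP a2].
have key w (i j : 'I_n) : i \in s1 -> j \in s2 -> w \in piece (xs j) ->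
    w \in piece (xs i) -> False.
  move=> is1 js2 wj wi.
  have eij := piece_xs_inj (a1 _ is1) (a2 _ js2) wi wj; subst j.
  by move: nh => /hasPn /(_ _ js2); rewrite is1.
split.
  apply/setP => v; rewrite !inE !mem_bigcup_pieces; apply/negP.
  by move=> /andP[/hasP [i is1 vi] /hasP [j js2 vj]]; apply: (key v i j is1 js2 vj vi).
move=> u w; rewrite !mem_bigcup_pieces => /hasP [i is1 ui] /hasP [j js2 wj].
by apply/negP => uw; apply: (key w i j is1 js2 wj (piece_closed ui uw)).
Qed.

(* At least two neighbour F-trees are covered by blocks of size 2 or 3. *)
Lemma good_on_Fbranches (s : seq 'I_n) : uniq s ->
  all (fun i : 'I_n => (i < p) && nbrF e (xs i) x) s -> 2 <= size s ->
  exists t, good_on (\bigcup_(i <- s) piece (xs i)) t.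
Proof.
have [m] := ubnP (size s); elim: m s => // m IH [|a [|b r]] //= szm ur allF _.
have [r01|r2] := leqP (size r) 1.
  by apply: good_on_block => //=; case: r {szm ur allF} r01 => [|c [|d r]].
rewrite -[a :: b :: r]/([:: a; b] ++ r) big_cat.
move: (ur) => /= /and3P[]; rewrite inE negb_or => /andP[ab _] _ ur'.
move: allF => /= /and3P[Fa Fb Fr].
have uab : uniq [:: a; b] by rewrite /= inE ab.
have Fab : all (fun i : 'I_n => (i < p) && nbrF e (xs i) x) [:: a; b] by rewrite /= Fa Fb.
have [t1 g1] := @good_on_block [:: a; b] uab Fab erefl.
have [t2 g2] : exists t, good_on (\bigcup_(i <- r) piece (xs i)) t.
  by apply: IH ur' Fr r2; move: szm => /=; lia.
have ap : all (fun i : 'I_n => i < p) ([:: a; b] ++ r).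
  by rewrite /= (andP Fa).1 (andP Fb).1; apply: sub_all Fr => i /andP[].
have [dis sep] := @pieces_apart [:: a; b] r ur ap.
by exists (t1 * t2)%g; apply: good_onU dis sep g1 g2.
Qed.

Section Branches.
Hypothesis other_well : forall i : 'I_n, i < p -> ~~ nbrF e (xs i) x ->
  exists s : {perm V}, well2 e (branch e (xs i) x) (xs i) s.
Hypothesis F_many : 2 <= #|[set i : 'I_n | (i < p) && nbrF e (xs i) x]|.

Lemma good_on_other_branches (s : seq 'I_n) : uniq s ->
  all (fun i : 'I_n => (i < p) && ~~ nbrF e (xs i) x) s ->
  exists t, good_on (\bigcup_(i <- s) piece (xs i)) t.
Proof.
elim: s => [|a r IH] /=; first by exists 1%g; rewrite big_nil; apply: good_on0.
move=> /andP[ar ur] /andP[/andP[ap Fa] alr].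
have [t1 w1] := other_well ap Fa; rewrite branch_piece // in w1.
have [t2 g2] := IH ur alr.
have u1 : uniq ([:: a] ++ r) by rewrite /= ar ur.
have ap1 : all (fun i : 'I_n => i < p) ([:: a] ++ r).
  by rewrite /= ap; apply: sub_all alr => i /andP[].
have [dis sep] := @pieces_apart [:: a] r u1 ap1.
rewrite big_seq1 in dis sep.
by exists (t1 * t2)%g; rewrite big_cons; apply: good_onU dis sep (good_on_branch ap w1) g2.
Qed.

Lemma good_on_outside_core : exists t, good_on (~: piece x) t.
Proof.
set lF := enum [set i : 'I_n | (i < p) && nbrF e (xs i) x].
set lN := enum [set i : 'I_n | (i < p) && ~~ nbrF e (xs i) x].
have aF : all (fun i : 'I_n => (i < p) && nbrF e (xs i) x) lF.
  by apply/allP => i; rewrite mem_enum inE.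
have aN : all (fun i : 'I_n => (i < p) && ~~ nbrF e (xs i) x) lN.
  by apply/allP => i; rewrite mem_enum inE.
have szF : 2 <= size lF by rewrite /lF -cardE.
have [tF gF] := good_on_Fbranches (enum_uniq _) aF szF.
have [tN gN] := good_on_other_branches (enum_uniq _) aN.
have uFN : uniq (lF ++ lN).
  rewrite cat_uniq !enum_uniq /= andbT; apply/hasPn => i.
  by rewrite !mem_enum !inE => /andP[_ /negbTE ->]; rewrite andbF.
have memFN i : (i \in lF ++ lN) = (i < p).
  by rewrite mem_cat !mem_enum !inE -andb_orr orbN andbT.
have aFN : all (fun i : 'I_n => i < p) (lF ++ lN) by apply/allP => i; rewrite memFN.
have [dis sep] := pieces_apart uFN aFN.
have -> : ~: piece x = \bigcup_(i <- lF ++ lN) piece (xs i).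
  apply/setP => v; rewrite inE mem_bigcup_pieces.
  case: (piece_cover v) => [vx|[i ip vi]].
    rewrite vx; apply/esym/hasPn => i; rewrite memFN => ip.
    by apply: contraL vx; apply: branch_notin_core.
  by rewrite (negbTE (branch_notin_core ip vi)); apply/esym/hasP; exists i; rewrite ?memFN.
by exists (tF * tN)%g; rewrite big_cat; apply: good_onU dis sep gF gN.
Qed.

End Branches.

Section Glue.
Hypothesis T_nonstar : nonstar_tree e [set: V].
Variable z : V.
Variable s' : {perm V}.
Hypothesis s'_well : well2 e (piece x) z s'.
Hypothesis s'_x : dist_le e (piece x) x (s' x) 3.
Variable t : {perm V}.
Hypothesis t_good : good_on (~: piece x) t.

Local Notation sg := (s' * t)%g.

Lemma good_on_glued : good_on [set: V] sg.
Proof.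
rewrite -(setUCr (piece x)); apply: good_onU (good_on_core s'_well) t_good.
  by rewrite setICr.
by move=> u w ux; rewrite inE => wx; apply: contra wx; apply: piece_closed.
Qed.

Lemma glued_core v : v \in piece x -> sg v = s' v.
Proof.
have [[[pT _] _ _ _ _] [[pt _] _ _ _ _]] := (good_on_core s'_well, t_good).
by apply: permM_on_left pT pt (setICr _).
Qed.

(* A cut edge x x_i goes to a non-edge: s x moves inside T' but not to x,
   while s x_i lies outside T'; and both are within distance 3 of x. *)
Lemma glued_cut_edge b : b \in cutnb ->
  ~~ e (sg x) (sg b) /\ dist_le e [set: V] (sg x) (sg b) 6.
Proof.
move=> bP; have [[pA fA] _ dA _ _] := good_on_glued.
have [[pT fT] _ _ _ _] := good_on_core s'_well.
have xT : x \in piece x by apply: piece_self.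
have sbT : sg b \notin piece x.
  have [[pt _] _ _ _ _] := t_good.
  have bO : b \in ~: piece x by rewrite inE cutnb_notin_core.
  have : t b \in ~: piece x by rewrite (perm_closed _ pt).
  by rewrite permM (out_perm pT) -?in_setC.
split.
  apply/negP => ee; have sxT : sg x \in piece x by rewrite glued_core // perm_closed.
  have [h _] := core_edge_out sxT sbT ee.
  by move: (fT x xT); rewrite -glued_core // h eqxx.
have xsx : dist_le e [set: V] (sg x) x 3.
  by rewrite glued_core //; apply: (dist_sym e_sym); exact: dist_sub (subsetT _) s'_x.
exact: dist_trans xsx (dA b (in_setT b) bP).2.
Qed.

Lemma glued_edge a b : e a b -> ~~ e (sg a) (sg b) /\ dist_le e [set: V] (sg a) (sg b) 6.
Proof.
have [_ aA _ _ _] := good_on_glued.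
move=> eab; case kab : (kept a b); first by apply: aA; rewrite ?in_setT.
have := cut_edgeP eab (negbT kab) => /orP[] /andP[/eqP -> bP].
  exact: glued_cut_edge.
rewrite e_sym; have [h1 h2] := glued_cut_edge bP.
by split=> //; apply: (dist_sym e_sym).
Qed.

Lemma well2_glued : well2 e [set: V] z sg.
Proof.
have [[pA fA] _ dA lA oA] := good_on_glued.
have [[_ zT] _ [_ dzT] [dnT _] _] := s'_well.
split.
- by split=> //; rewrite in_setT.
- split; first by move=> v _; apply: fA; rewrite in_setT.
  split; first by apply/subsetP => v; rewrite in_setT.
  by move=> a b; rewrite indT => /glued_edge [].
- split; first by move=> a b; rewrite indT => /glued_edge [].
  by rewrite glued_core //; exact: dist_sub (subsetT _) dzT.
- split; last by move=> y _ dy; apply: lA; rewrite ?in_setT.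
  move=> y; rewrite indT => ezy; case kzy : (kept z y).
    have yT := piece_closed zT kzy.
    rewrite glued_core //; apply: dist_sub (subsetT _) (dnT _ _).
    by rewrite /ind /= zT yT ezy.
  have := cut_edgeP ezy (negbT kzy) => /orP[] /andP[/eqP zx yP].
    exact: (dA y (in_setT y) yP).1.
  by move: (cutnb_notin_core yP); rewrite zT.
- by move=> v _; apply: oA; rewrite in_setT.
Qed.

End Glue.

End Gluing.

Theorem lemma3p5 (V : finType) (e : rel V)
  (e_sym : symmetric e) (e_irr : irreflexive e)
  (T_nonstar : nonstar_tree e [set: V])
  (x : V) (n : nat) (xs : 'I_n -> V)
  (xs_inj : injective xs)
  (xs_nbr : forall v, e x v <-> exists i, xs i = v)
  (n_ge4 : 4 <= n) (p : nat) (p_ge3 : 3 <= p) (p_ltn : p < n)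
  (F2 : 2 <= #|[set i : 'I_n | (i < p) && nbrF e (xs i) x]| <= p.-1)
  (other_well : forall i : 'I_n, i < p -> ~~ nbrF e (xs i) x ->
      exists s : {perm V}, well2 e (branch e (xs i) x) (xs i) s)
  (z : V) (s' : {perm V})
  (s'_well : well2 e (cut_comp e x [set xs i | i : 'I_n & i < p]) z s')
  (s'_x : dist_le e (cut_comp e x [set xs i | i : 'I_n & i < p]) x (s' x) 3) :
  exists s : {perm V}, well2 e [set: V] z s /\
    {in cut_comp e x [set xs i | i : 'I_n & i < p], forall v, s v = s' v}.
Proof.
have T_tree : is_tree e [set: V] by case/andP: T_nonstar.
have n_ge2 : 1 < n by apply: leq_trans n_ge4.
have F_many : 2 <= #|[set i : 'I_n | (i < p) && nbrF e (xs i) x]| by case/andP: F2.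
have [t t_good] :=
  good_on_outside_core e_sym e_irr T_tree xs_inj xs_nbr n_ge2 other_well F_many.
exists (s' * t)%g; split.
- exact: (well2_glued e_sym e_irr T_tree xs_inj xs_nbr n_ge2 T_nonstar s'_well s'_x t_good).
- exact: (glued_core e_sym e_irr T_tree xs_inj xs_nbr n_ge2 s'_well t_good).
Qed.
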